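(* Let $\ell\in\mathbb{Z}^2$ and define the event $\Sigma=\{\mathrm{An}(\ell)\cap\mathrm{An}(0)\neq\emptyset\}\cup\{\mathrm{De}(\ell)\cap\mathrm{De}(0)\neq\emptyset\}$. Then for every $0\le p\le 1$, $$P_p\big(\mathrm{An}(\ell)\cap\mathrm{An}(0)\neq\emptyset\big)\ \ge\ 1-\big(1-P_p(\Sigma)\big)^{1/2}.$$
   Context: Oriented square lattice: node set $\mathbb{Z}^2$, with a directed edge $u\to v$ if and only if $v-u\in\{(1,0),(0,1)\}$; $E(\mathbb{Z}^2)$ denotes this edge set. Bernoulli bond percolation with parameter $p\in[0,1]$: each edge of $E(\mathbb{Z}^2)$ is independently declared open with probability $p$ and closed otherwise; $P_p$ is the resulting product measure on $\Omega=\{0,1\}^{E(\mathbb{Z}^2)}$. In a configuration, $\mathrm{An}(u)$ is the set consisting of $u$ and all nodes $v$ from which there is a directed path $v\to\cdots\to u$ consisting of open edges traversed in their orientation; $\mathrm{De}(u)$ is the set consisting of $u$ and all nodes $v$ reachable from $u$ by such a directed open path. *)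

From Stdlib Require Import Reals ZArith List Classical ClassicalDescription.
Open Scope R_scope.

Definition node : Type := (Z * Z)%type.

(* An oriented edge is (u, b): if b = true it is u -> u + (1,0),
   if b = false it is u -> u + (0,1).  This enumerates E(Z^2) bijectively. *)
Definition edge : Type := (node * bool)%type.

Definition tail (e : edge) : node := fst e.
Definition head (e : edge) : node :=
  match e with
  | ((x, y), true) => ((x + 1)%Z, y)
  | ((x, y), false) => (x, (y + 1)%Z)
  end.

(* A configuration omega in Omega = {0,1}^{E(Z^2)}; true = open. *)
Definition config : Type := edge -> bool.

Inductive open_path (w : config) : node -> node -> Prop :=
| op_refl : forall u, open_path w u u
| op_step : forall (e : edge) v,
    w e = true -> open_path w (head e) v -> open_path w (tail e) v.

Definition An (w : config) (u v : node) : Prop := open_path w v u.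
Definition De (w : config) (u v : node) : Prop := open_path w u v.

Definition origin : node := (0%Z, 0%Z).

Definition EvAn (l : node) (w : config) : Prop :=
  exists v, An w l v /\ An w origin v.

Definition EvSigma (l : node) (w : config) : Prop :=
  EvAn l w \/ exists v, De w l v /\ De w origin v.

Definition edge_eq_dec : forall e1 e2 : edge, {e1 = e2} + {e1 <> e2}.
Proof. repeat decide equality; apply Z.eq_dec. Defined.

Definition upd (w : config) (e : edge) (b : bool) : config :=
  fun e' => if edge_eq_dec e' e then b else w e'.

(* Exact product-measure probability that E holds for the configuration
   obtained from w by resampling the (distinct) edges of L independently,
   each open with probability p. *)
Fixpoint probL (p : R) (L : list edge) (w : config) (E : config -> Prop) : R :=
  match L with
  | nil => if excluded_middle_informative (E w) then 1 else 0
  | e :: L' => p * probL p L' (upd w e true) E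
               + (1 - p) * probL p L' (upd w e false) E
  end.

Definition zrange (n : nat) : list Z :=
  map (fun i => (Z.of_nat i - Z.of_nat n)%Z) (seq 0 (2 * n + 1)).

Definition in_box (n : nat) (u : node) : bool :=
  (Z.leb (- Z.of_nat n) (fst u) && Z.leb (fst u) (Z.of_nat n) &&
   Z.leb (- Z.of_nat n) (snd u) && Z.leb (snd u) (Z.of_nat n))%bool.

Definition box_edges (n : nat) : list edge :=
  filter (fun e => in_box n (head e))
    (flat_map (fun x => flat_map (fun y => ((x, y), true) :: ((x, y), false) :: nil)
                         (zrange n)) (zrange n)).

(* P_p( E evaluated on the configuration where all edges outside the box
   [-n,n]^2 are closed ).  For increasing events determined by finite open
   paths (such as EvAn, EvSigma) this is nondecreasing in n and converges to
   P_p(E) by continuity of the product measure. *)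
Definition boxprob (p : R) (n : nat) (E : config -> Prop) : R :=
  probL p (box_edges n) (fun _ => false) E.

(** The events "no common ancestor" and "no common descendant" of [l] and
    [0] are decreasing, so by Harris' inequality
    [(1 - P(An)) (1 - P(De)) <= 1 - P(Sigma)], where [An] and [De] are the two
    events whose union is [Sigma].  The point reflection [u |-> l - u] of
    [Z^2] preserves the product measure, reverses the orientation of edges
    and swaps [l] and [0]; it therefore maps the event [De] onto [An], so
    [P(De) = P(An)] and [(1 - P(An))^2 <= 1 - P(Sigma)].  In finite boxes the
    reflection only enlarges the box, which is harmless since the box
    probabilities of the increasing event [An] increase to their limit. *)
From Stdlib Require Import Reals ZArith List Lra Lia Permutation.
From Stdlib Require Import FunctionalExtensionality ClassicalDescription.
Open Scope R_scope.

Definition config_le (w w' : config) : Prop :=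
  forall e, w e = true -> w' e = true.

Definition increasing (E : config -> Prop) : Prop :=
  forall w w', config_le w w' -> E w -> E w'.

Definition decreasing (E : config -> Prop) : Prop :=
  forall w w', config_le w w' -> E w' -> E w.

Lemma upd_id w e b : w e = b -> upd w e b = w.
Proof.
  intros Hb; apply functional_extensionality; intro f; unfold upd.
  destruct (edge_eq_dec f e); subst; auto.
Qed.

Lemma upd_upd w e b b' : upd (upd w e b) e b' = upd w e b'.
Proof.
  apply functional_extensionality; intro f; unfold upd.
  destruct (edge_eq_dec f e); auto.
Qed.

Lemma upd_comm w e1 e2 b1 b2 : e1 <> e2 ->
  upd (upd w e1 b1) e2 b2 = upd (upd w e2 b2) e1 b1.
Proof.
  intro Hne; apply functional_extensionality; intro f; unfold upd.
  destruct (edge_eq_dec f e2), (edge_eq_dec f e1); congruence.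
Qed.

Lemma config_le_upd w w' e b : config_le w w' -> config_le (upd w e b) (upd w' e b).
Proof. intros Hw f; unfold upd; destruct (edge_eq_dec f e); auto. Qed.

Lemma config_le_upd_false_true w e : config_le (upd w e false) (upd w e true).
Proof. intro f; unfold upd; destruct (edge_eq_dec f e); auto; discriminate. Qed.

Section Resampling.

Variable p : R.
Hypothesis Hp : 0 <= p <= 1.

Lemma probL_bounds L w E : 0 <= probL p L w E <= 1.
Proof.
  revert w; induction L as [|e L IH]; intro w; simpl.
  - destruct (excluded_middle_informative (E w)); lra.
  - pose proof (IH (upd w e true)); pose proof (IH (upd w e false)); nra.
Qed.

Lemma probL_impl L w (E E' : config -> Prop) :
  (forall v, E v -> E' v) -> probL p L w E <= probL p L w E'.
Proof.
  intro HE; revert w; induction L as [|e L IH]; intro w; simpl.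
  - destruct (excluded_middle_informative (E w)), (excluded_middle_informative (E' w));
      try lra.
    exfalso; auto.
  - pose proof (IH (upd w e true)); pose proof (IH (upd w e false)); nra.
Qed.

Lemma probL_not L w E : probL p L w (fun v => ~ E v) = 1 - probL p L w E.
Proof.
  revert w; induction L as [|e L IH]; intro w; simpl.
  - destruct (excluded_middle_informative (E w)), (excluded_middle_informative (~ E w));
      tauto || lra.
  - rewrite !IH; ring.
Qed.

Lemma probL_increasing L w w' E :
  increasing E -> config_le w w' -> probL p L w E <= probL p L w' E.
Proof.
  intro HE; revert w w'; induction L as [|e L IH]; intros w w' Hw; simpl.
  - destruct (excluded_middle_informative (E w)), (excluded_middle_informative (E w'));
      try lra.
    exfalso; eauto.
  - pose proof (IH _ _ (config_le_upd w w' e true Hw)).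
    pose proof (IH _ _ (config_le_upd w w' e false Hw)).
    nra.
Qed.

Lemma probL_decreasing L w w' E :
  decreasing E -> config_le w w' -> probL p L w' E <= probL p L w E.
Proof.
  intros HE Hw.
  assert (HnotE : increasing (fun v => ~ E v)) by (intros v v' Hv HnE HE'; eauto).
  pose proof (probL_increasing L w w' _ HnotE Hw) as Hle.
  rewrite !probL_not in Hle; lra.
Qed.

Lemma probL_upd_in L w e b E : In e L -> probL p L (upd w e b) E = probL p L w E.
Proof.
  revert w; induction L as [|f L IH]; intros w Hin; simpl in *; [tauto|].
  destruct (edge_eq_dec f e) as [<-|Hne].
  - rewrite !upd_upd; reflexivity.
  - destruct Hin as [->|Hin]; [congruence|].
    rewrite !(upd_comm w e f) by congruence.
    rewrite !IH; auto.
Qed.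

Lemma probL_dup L w e E : In e L -> probL p (e :: L) w E = probL p L w E.
Proof. intro Hin; simpl; rewrite !probL_upd_in by exact Hin; ring. Qed.

Lemma probL_nodup L w E : probL p (nodup edge_eq_dec L) w E = probL p L w E.
Proof.
  revert w; induction L as [|e L IH]; intro w; [reflexivity|simpl nodup].
  destruct (in_dec edge_eq_dec e L) as [Hin|Hnin].
  - rewrite IH, probL_dup; auto.
  - simpl; rewrite !IH; reflexivity.
Qed.

Lemma probL_perm L M w E : Permutation L M -> probL p L w E = probL p M w E.
Proof.
  intro HLM; revert w; induction HLM as [|e L M _ IH|e f L|L M N _ IH1 _ IH2];
    intro w; simpl.
  - reflexivity.
  - rewrite !IH; reflexivity.
  - destruct (edge_eq_dec e f) as [->|Hne]; [ring|].
    rewrite !(upd_comm _ e f) by congruence; ring.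
  - rewrite IH1, IH2; reflexivity.
Qed.

Lemma probL_same_edges L M w E :
  (forall e, In e L <-> In e M) -> probL p L w E = probL p M w E.
Proof.
  intro HLM; rewrite <- (probL_nodup L), <- (probL_nodup M).
  apply probL_perm, NoDup_Permutation; try apply NoDup_nodup.
  intro e; rewrite !nodup_In; auto.
Qed.

Lemma probL_app_closed L X w E : increasing E ->
  (forall f, In f X -> w f = false) -> probL p L w E <= probL p (X ++ L) w E.
Proof.
  intro HE; revert w; induction X as [|e X IH]; intros w Hclosed; simpl; [lra|].
  assert (Hw : upd w e false = w) by (apply upd_id, Hclosed; simpl; auto).
  pose proof (probL_increasing (X ++ L) _ _ E HE (config_le_upd_false_true w e)) as Hopen.
  rewrite Hw in *.
  assert (HX : probL p L w E <= probL p (X ++ L) w E)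
    by (apply IH; intros f Hf; apply Hclosed; simpl; auto).
  nra.
Qed.

Lemma probL_incl L1 L2 w E : increasing E -> incl L1 L2 ->
  (forall f, In f L2 -> ~ In f L1 -> w f = false) ->
  probL p L1 w E <= probL p L2 w E.
Proof.
  intros HE H12 Hclosed.
  set (X := filter (fun f => if in_dec edge_eq_dec f L1 then false else true) L2).
  rewrite (probL_same_edges L2 (X ++ L1)).
  - apply probL_app_closed; auto.
    intros f Hf; apply filter_In in Hf as [Hf Hnin].
    destruct (in_dec edge_eq_dec f L1); [discriminate | auto].
  - intro f; rewrite in_app_iff; unfold X; rewrite filter_In.
    destruct (in_dec edge_eq_dec f L1) as [Hin|]; [|tauto].
    split; [tauto|intros _; apply H12, Hin].
Qed.

Lemma probL_map_involution (s : edge -> edge) L w E :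
  (forall e, s (s e) = e) ->
  probL p (map s L) w (fun v => E (fun e => v (s e))) = probL p L (fun e => w (s e)) E.
Proof.
  intro Hs; revert w; induction L as [|e L IH]; intro w; simpl; auto.
  assert (Hupd : forall b, (fun f => upd w (s e) b (s f)) = upd (fun f => w (s f)) e b).
  { intro b; apply functional_extensionality; intro f; unfold upd.
    destruct (edge_eq_dec (s f) (s e)) as [Hsf|Hsf], (edge_eq_dec f e); subst; auto.
    - rewrite <- (Hs f), Hsf, Hs in *; congruence.
    - congruence. }
  rewrite !IH, !Hupd; reflexivity.
Qed.

Lemma probL_harris L w F G : decreasing F -> decreasing G ->
  probL p L w F * probL p L w G <= probL p L w (fun v => F v /\ G v).
Proof.
  intros HF HG; revert w; induction L as [|e L IH]; intro w; simpl.
  - destruct (excluded_middle_informative (F w)), (excluded_middle_informative (G w)),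
      (excluded_middle_informative (F w /\ G w)); tauto || lra.
  - pose proof (IH (upd w e true)); pose proof (IH (upd w e false)).
    pose proof (probL_decreasing L _ _ F HF (config_le_upd_false_true w e)).
    pose proof (probL_decreasing L _ _ G HG (config_le_upd_false_true w e)).
    set (f1 := probL p L (upd w e true) F) in *.
    set (f0 := probL p L (upd w e false) F) in *.
    set (g1 := probL p L (upd w e true) G) in *.
    set (g0 := probL p L (upd w e false) G) in *.
    (* [p f1 g1 + (1 - p) f0 g0] exceeds the product of the two means by
       [p (1 - p) (f0 - f1) (g0 - g1)], and both differences are nonnegative. *)
    assert (0 <= p * (1 - p) * ((f0 - f1) * (g0 - g1))).
    { apply Rmult_le_pos; apply Rmult_le_pos; lra. }
    nra.
Qed.

Lemma harris_or L w A B : increasing A -> increasing B ->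
  (1 - probL p L w A) * (1 - probL p L w B) <= 1 - probL p L w (fun v => A v \/ B v).
Proof.
  intros HA HB; rewrite <- !probL_not.
  eapply Rle_trans; [apply probL_harris|apply probL_impl; tauto].
  - intros v v' Hv HnA Hv'; eauto.
  - intros v v' Hv HnB Hv'; eauto.
Qed.

End Resampling.

Lemma open_path_mono w w' u v : config_le w w' -> open_path w u v -> open_path w' u v.
Proof. intros Hw; induction 1; [apply op_refl | apply op_step; auto]. Qed.

Lemma open_path_snoc w u f :
  open_path w u (tail f) -> w f = true -> open_path w u (head f).
Proof.
  remember (tail f) as v eqn:Hv; induction 1; intros Hf; subst.
  - apply op_step, op_refl; auto.
  - apply op_step; auto.
Qed.

Definition reflect_node (l u : node) : node := ((fst l - fst u)%Z, (snd l - snd u)%Z).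

(* The edge [u -> u + d] is sent to [l - u - d -> l - u]. *)
Definition reflect_edge (l : node) (e : edge) : edge :=
  match e with
  | ((x, y), true) => ((fst l - x - 1)%Z, (snd l - y)%Z, true)
  | ((x, y), false) => ((fst l - x)%Z, (snd l - y - 1)%Z, false)
  end.

Lemma reflect_edge_involutive l e : reflect_edge l (reflect_edge l e) = e.
Proof. destruct l, e as [[x y] []]; unfold edge, node; simpl; repeat f_equal; lia. Qed.

Lemma tail_reflect_edge l e : tail (reflect_edge l e) = reflect_node l (head e).
Proof. destruct l, e as [[x y] []]; unfold reflect_node; simpl; f_equal; lia. Qed.

Lemma head_reflect_edge l e : head (reflect_edge l e) = reflect_node l (tail e).
Proof. destruct l, e as [[x y] []]; unfold reflect_node; simpl; f_equal; lia. Qed.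

Lemma reflect_node_self l : reflect_node l l = origin.
Proof. destruct l; unfold reflect_node, origin; simpl; f_equal; lia. Qed.

Lemma reflect_node_origin l : reflect_node l origin = l.
Proof. destruct l; unfold reflect_node, origin; simpl; f_equal; lia. Qed.

Lemma open_path_reflect l w u v : open_path w u v ->
  open_path (fun e => w (reflect_edge l e)) (reflect_node l v) (reflect_node l u).
Proof.
  induction 1 as [|e v Hopen _ IH]; [apply op_refl|].
  rewrite <- head_reflect_edge; apply open_path_snoc.
  - rewrite tail_reflect_edge; exact IH.
  - rewrite reflect_edge_involutive; exact Hopen.
Qed.

Definition EvDe (l : node) (w : config) : Prop := exists v, De w l v /\ De w origin v.

Lemma EvAn_increasing l : increasing (EvAn l).
Proof. intros w w' Hw [v [H1 H2]]; exists v; split; eapply open_path_mono; eauto. Qed.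

Lemma EvDe_increasing l : increasing (EvDe l).
Proof. intros w w' Hw [v [H1 H2]]; exists v; split; eapply open_path_mono; eauto. Qed.

Lemma EvDe_reflect l w : EvDe l (fun e => w (reflect_edge l e)) -> EvAn l w.
Proof.
  intros [v [Hl H0]]; exists (reflect_node l v); unfold An, De in *.
  apply (open_path_reflect l) in Hl, H0.
  assert (Hw : (fun e => w (reflect_edge l (reflect_edge l e))) = w).
  { apply functional_extensionality; intro; rewrite reflect_edge_involutive; auto. }
  rewrite Hw, reflect_node_self in Hl; rewrite Hw, reflect_node_origin in H0.
  split; assumption.
Qed.

Lemma in_box_spec n u : in_box n u = true <->
  (- Z.of_nat n <= fst u <= Z.of_nat n /\ - Z.of_nat n <= snd u <= Z.of_nat n)%Z.
Proof. unfold in_box; rewrite !Bool.andb_true_iff, !Z.leb_le; tauto. Qed.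

Lemma In_zrange n z : In z (zrange n) <-> (- Z.of_nat n <= z <= Z.of_nat n)%Z.
Proof.
  unfold zrange; rewrite in_map_iff; split.
  - intros [i [<- Hi]]; apply in_seq in Hi; lia.
  - intro Hz; exists (Z.to_nat (z + Z.of_nat n)); rewrite in_seq; lia.
Qed.

Lemma In_box_edges n e :
  In e (box_edges n) <-> in_box n (tail e) = true /\ in_box n (head e) = true.
Proof.
  destruct e as [[x y] b]; unfold box_edges, tail; simpl fst.
  rewrite filter_In, in_flat_map, (in_box_spec n (x, y)); simpl.
  setoid_rewrite in_flat_map; setoid_rewrite In_zrange; split.
  - intros [[x' [Hx [y' [Hy Hin]]]] Hh]; split; [|exact Hh]; simpl in Hin.
    destruct Hin as [Heq|[Heq|[]]]; injection Heq; intros; subst; lia.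
  - intros [Hxy Hh]; split; [|exact Hh].
    exists x; split; [lia|]; exists y; split; [lia|].
    destruct b; simpl; auto.
Qed.

Lemma boxprob_bounds p n E : 0 <= p <= 1 -> 0 <= boxprob p n E <= 1.
Proof. intro Hp; apply probL_bounds, Hp. Qed.

Lemma boxprob_mono p n m E : 0 <= p <= 1 -> increasing E -> (n <= m)%nat ->
  boxprob p n E <= boxprob p m E.
Proof.
  intros Hp HE Hnm; apply probL_incl; auto.
  intros e; rewrite !In_box_edges, !in_box_spec; lia.
Qed.

Lemma boxprob_EvDe_le_EvAn p l n : 0 <= p <= 1 ->
  boxprob p n (EvDe l) <= boxprob p (n + Z.to_nat (Z.abs (fst l) + Z.abs (snd l))) (EvAn l).
Proof.
  intro Hp; unfold boxprob.
  change (fun _ : edge => false) with (fun e => (fun _ : edge => false) (reflect_edge l e)) at 1.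
  rewrite <- probL_map_involution by apply reflect_edge_involutive.
  eapply Rle_trans; [apply probL_impl; [exact Hp | exact (EvDe_reflect l)]|].
  apply probL_incl; auto using EvAn_increasing.
  intros e He; apply in_map_iff in He as [f [<- Hf]].
  rewrite In_box_edges, tail_reflect_edge, head_reflect_edge in *.
  destruct l, f as [[x y] []]; rewrite !in_box_spec in *; simpl in *; lia.
Qed.

Lemma boxprob_Sigma_harris p l n : 0 <= p <= 1 ->
  (1 - boxprob p n (EvAn l)) * (1 - boxprob p n (EvDe l)) <= 1 - boxprob p n (EvSigma l).
Proof. intro Hp; apply harris_or; auto using EvAn_increasing, EvDe_increasing. Qed.

Lemma Un_cv_const c : Un_cv (fun _ => c) c.
Proof. intros eps Heps; exists 0%nat; intros n _; rewrite Rdist_eq; lra. Qed.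

Theorem mainTheorem4 (l : node) (p PA PSigma : R) :
  0 <= p <= 1 ->
  Un_cv (fun n => boxprob p n (EvAn l)) PA ->
  Un_cv (fun n => boxprob p n (EvSigma l)) PSigma ->
  PA >= 1 - sqrt (1 - PSigma).
Proof.
  intros Hp HA HSigma.
  assert (HAn : forall n, boxprob p n (EvAn l) <= PA).
  { apply growing_ineq; auto.
    intro n; apply boxprob_mono; auto using EvAn_increasing. }
  assert (Hbox : forall n,
    (1 - boxprob p n (EvAn l)) * (1 - PA) <= 1 - boxprob p n (EvSigma l)).
  { intro n; eapply Rle_trans; [|apply boxprob_Sigma_harris; exact Hp].
    pose proof (boxprob_bounds p n (EvAn l) Hp).
    pose proof (Rle_trans _ _ _ (boxprob_EvDe_le_EvAn p l n Hp) (HAn _)).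
    apply Rmult_le_compat_l; lra. }
  assert (Hsq : (1 - PA) * (1 - PA) <= 1 - PSigma).
  { apply (Rle_cv_lim Hbox).
    - apply CV_mult; auto using CV_minus, Un_cv_const.
    - auto using CV_minus, Un_cv_const. }
  assert (1 - PA <= sqrt (1 - PSigma)).
  { pose proof (Rle_0_sqr (1 - PA)); unfold Rsqr in *.
    apply Rsqr_incr_0_var; [rewrite Rsqr_sqrt; unfold Rsqr; lra | apply sqrt_pos]. }
  lra.
Qed.
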